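(* Let $N=\{1,\dots,n\}$, $\eta>0$, $B\ge1$ an integer. Let $(A(k))_{k\ge0}$ be $n\times n$ matrices, $x(0)\in\mathbb{R}^n$, and $x(k+1)=A(k)x(k)$. Assume: (i) each $A(k)$ is doubly stochastic with positive diagonal entries and all positive entries at least $\eta$; (ii) for every integer $k\ge0$, every permutation $\sigma$ of $N$ with $x_{\sigma(1)}(kB)\ge\cdots\ge x_{\sigma(n)}(kB)$, and every $d\in\{1,\dots,n-1\}$, either $x_{\sigma(d)}(kB)=x_{\sigma(d+1)}(kB)$, or there exist $t\in\{kB,\dots,(k+1)B-1\}$, $i\in\{\sigma(1),\dots,\sigma(d)\}$, $j\in\{\sigma(d+1),\dots,\sigma(n)\}$ with $(i,j)$ or $(j,i)$ in $\mathcal{E}(A(t))$. Then for every integer $k\ge0$ and every permutation $\sigma$ of $N$ with $x_{\sigma(1)}(kB)\ge\cdots\ge x_{\sigma(n)}(kB)$, \[V(x(kB))-V(x((k+1)B))\ge\frac\eta2\sum_{i=1}^{n-1}\big(x_{\sigma(i)}(kB)-x_{\sigma(i+1)}(kB)\big)^2.\]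
   Context: A matrix is doubly stochastic if it is nonnegative with all row and column sums equal to $1$. For a matrix $A=[a_{ij}]$, $\mathcal{E}(A)$ is the set of directed edges $(j,i)$ (including self-edges) with $a_{ij}>0$. For $x\in\mathbb{R}^n$, $\bar x=\frac1n\sum_ix_i$ and $V(x)=\sum_i(x_i-\bar x)^2$. *)

(* R : realFieldType, vectors are column vectors 'cV[R]_n,
   indices N = {1,...,n} are represented 0-based by 'I_n. *)
From HB Require Import structures.
From mathcomp Require Import all_boot all_order all_algebra all_fingroup.
Set Implicit Arguments. Unset Strict Implicit. Unset Printing Implicit Defensive.
Import Order.TTheory GRing.Theory Num.Theory.
Local Open Scope ring_scope.

Definition doubly_stochastic (R : realFieldType) (n : nat) (A : 'M[R]_n) : Prop :=
  (forall i j, 0 <= A i j) /\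
  (forall i, \sum_j A i j = 1) /\
  (forall j, \sum_i A i j = 1).

Definition in_edges (R : realFieldType) (n : nat) (A : 'M[R]_n) (j i : 'I_n) : Prop :=
  0 < A i j.

Definition xbar (R : realFieldType) (n : nat) (x : 'cV[R]_n) : R :=
  (\sum_i x i 0) / n%:R.
Definition Vfun (R : realFieldType) (n : nat) (x : 'cV[R]_n) : R :=
  \sum_i (x i 0 - xbar x) ^+ 2.

(* entry x_{sigma(p+1)} (0-based position p); 0 out of range (never used there) *)
Definition xpos (R : realFieldType) (n : nat) (s : 'S_n) (x : 'cV[R]_n) (p : nat) : R :=
  match (insub p : option 'I_n) with Some i => x (s i) 0 | None => 0 end.

Definition sorted_by (R : realFieldType) (n : nat) (s : 'S_n) (x : 'cV[R]_n) : Prop :=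
  forall p q : nat, (p <= q)%N -> (q < n)%N -> xpos s x q <= xpos s x p.

From HB Require Import structures.
From mathcomp Require Import all_boot all_order all_algebra all_fingroup.
From mathcomp Require Import ring lra zify.
From Stdlib Require Import Classical.
Import Order.TTheory GRing.Theory Num.Theory.
Local Open Scope ring_scope.

(* For a doubly stochastic A, V(x) - V(Ax) = sum_p sum_j a_pj (x_j - (Ax)_p)^2,
   and the row p alone contributes at least eta/2 (M_p - m_p)^2, where M_p and
   m_p are the largest and smallest values of x among the neighbours of p.  The
   squared gaps of the sorted x(kB) lying inside [m_p, M_p] sum to at most
   (M_p - m_p)^2.  It remains to see that every nonzero gap is straddled by some
   row at some time of the window: until an edge first crosses the cut at that
   gap, the values above the cut stay above the gap and those below stay below
   it, so the crossing edge produces a row whose neighbourhood spans the gap. *)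

Section Variance.
Context {R : realFieldType} {n : nat}.

Lemma sum_mulr_col1 (A : 'M[R]_n) (f : 'I_n -> R) :
  (forall j, \sum_i A i j = 1) -> \sum_i \sum_j A i j * f j = \sum_j f j.
Proof.
move=> A_col1; rewrite exchange_big; apply: eq_bigr => j _.
by rewrite -mulr_suml A_col1 mul1r.
Qed.

Lemma sum_weighted_sqr_dev (w f : 'I_n -> R) : \sum_j w j = 1 ->
  \sum_j w j * (f j - \sum_l w l * f l) ^+ 2 =
  \sum_j w j * f j ^+ 2 - (\sum_l w l * f l) ^+ 2.
Proof.
move=> w1; set m := \sum_l w l * f l.
transitivity (\sum_j w j * f j ^+ 2 - m *+ 2 * m + m ^+ 2 * \sum_j w j).
  rewrite mulr_sumr /m mulr_sumr -sumrB -big_split /=.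
  by apply: eq_bigr => j _; ring.
by rewrite w1; ring.
Qed.

Lemma Vfun_sub_sum_sqr (z y : 'cV[R]_n) : \sum_i z i 0 = \sum_i y i 0 ->
  Vfun z - Vfun y = \sum_i z i 0 ^+ 2 - \sum_i y i 0 ^+ 2.
Proof.
move=> sum_zy; rewrite /Vfun /xbar -sum_zy; set c := _ / _.
transitivity (\sum_i (z i 0 ^+ 2 - y i 0 ^+ 2) - c *+ 2 * (\sum_i z i 0 - \sum_i y i 0)).
  rewrite -!sumrB mulr_sumr -sumrB; apply: eq_bigr => i _; ring.
by rewrite sum_zy subrr mulr0 subr0 sumrB.
Qed.

Lemma Vfun_sub_mulmx (A : 'M[R]_n) (y : 'cV[R]_n) : doubly_stochastic A ->
  Vfun y - Vfun (A *m y) = \sum_p \sum_j A p j * (y j 0 - (A *m y) p 0) ^+ 2.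
Proof.
move=> [_ [A_row1 A_col1]].
have Ay p : (A *m y) p 0 = \sum_j A p j * y j 0 by rewrite mxE.
have sum_Ay : \sum_p (A *m y) p 0 = \sum_j y j 0.
  by under eq_bigr do rewrite Ay; exact: sum_mulr_col1.
rewrite Vfun_sub_sum_sqr ?sum_Ay //.
under [RHS]eq_bigr do rewrite Ay sum_weighted_sqr_dev //.
rewrite sumrB sum_mulr_col1 //; congr (_ - _).
by apply: eq_bigr => p _; rewrite Ay.
Qed.

End Variance.

Section RealInequalities.
Context {R : realFieldType}.

Lemma sqr_subr_le (a b c : R) : (a - b) ^+ 2 <= 2 * ((a - c) ^+ 2 + (b - c) ^+ 2).
Proof.
rewrite -subr_ge0.
have -> : 2 * ((a - c) ^+ 2 + (b - c) ^+ 2) - (a - b) ^+ 2 = (a + b - c *+ 2) ^+ 2.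
  by ring.
exact: sqr_ge0.
Qed.

Lemma weighted_sqr_dev_ge (I : finType) (w f : I -> R) (eta c : R) (j1 j2 : I) :
  (forall j, 0 <= w j) -> 0 <= eta -> eta <= w j1 -> eta <= w j2 ->
  eta / 2 * (f j1 - f j2) ^+ 2 <= \sum_j w j * (f j - c) ^+ 2.
Proof.
move=> w_ge0 eta_ge0 w1 w2.
have term_ge0 j : 0 <= w j * (f j - c) ^+ 2 by rewrite mulr_ge0 ?sqr_ge0.
have [<-|j12] := eqVneq j1 j2.
  by rewrite subrr expr0n mulr0 sumr_ge0.
rewrite (bigD1 j1) // (bigD1 j2) /=; last by rewrite eq_sym j12.
have rest_ge0 : 0 <= \sum_(j | (j != j1) && (j != j2)) w j * (f j - c) ^+ 2.
  exact: sumr_ge0.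
have eta_half : 0 <= eta / 2 by rewrite divr_ge0.
have := ler_wpM2l eta_half (sqr_subr_le (f j1) (f j2) c).
have := ler_wpM2r (sqr_ge0 (f j1 - c)) w1.
have := ler_wpM2r (sqr_ge0 (f j2 - c)) w2.
lra.
Qed.

Definition clamp (m M v : R) := if v < m then m else if M < v then M else v.

Lemma clamp_bounds m M v : m <= M -> m <= clamp m M v <= M.
Proof.
rewrite /clamp => ?.
by case: (ltP v m) => ?; case: (ltP M v) => ?; apply/andP; split; lra.
Qed.

Lemma clamp_le_mono m M v w : m <= M -> w <= v -> clamp m M w <= clamp m M v.
Proof.
rewrite /clamp => ? ?.
by case: (ltP v m) => ?; case: (ltP M v) => ?;
   case: (ltP w m) => ?; case: (ltP M w) => ?; lra.
Qed.

Lemma clamp_id m M v : m <= v <= M -> clamp m M v = v.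
Proof.
by rewrite /clamp => /andP[? ?]; case: (ltP v m) => ?; case: (ltP M v) => ? //; lra.
Qed.

(* The gaps lying inside [m, M] are bounded by the increments of the clamped
   sequence, which telescope. *)
Lemma sum_sqr_gaps_le (u : nat -> R) (N : nat) (m M : R) :
  m <= M -> (forall i, (i < N)%N -> u i.+1 <= u i) ->
  \sum_(0 <= i < N) ((m <= u i.+1) && (u i <= M))%:R * (u i - u i.+1) ^+ 2
    <= (M - m) ^+ 2.
Proof.
move=> mM u_dec; set c := fun i => clamp m M (u i).
apply: (@le_trans _ _ (\sum_(0 <= i < N) (M - m) * (c i - c i.+1))).
  rewrite big_nat [X in _ <= X]big_nat; apply: ler_sum => i /andP[_ iN].
  have ui := u_dec i iN.
  case: andP => [[mu uM]|_] /=.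
    rewrite /c !clamp_id ?mu ?uM /=; try lra.
    by rewrite mul1r expr2 ler_wpM2r //; lra.
  by rewrite mul0r mulr_ge0 ?subr_ge0 //; exact: clamp_le_mono.
have telesc : \sum_(0 <= i < N) (c i - c i.+1) = c 0%N - c N.
  rewrite -opprB -(telescope_sumr c (leq0n N)) -sumrN.
  by apply: eq_bigr => i _; rewrite opprB.
have /andP[c0m c0M] := clamp_bounds _ _ (u 0%N) mM.
have /andP[cNm cNM] := clamp_bounds _ _ (u N) mM.
rewrite -mulr_sumr telesc expr2 ler_wpM2l /c; lra.
Qed.

End RealInequalities.

Section ConvexCombination.
Context {R : realFieldType} {I : finType} (w : I -> R).
Hypotheses (w_ge0 : forall i, 0 <= w i) (w_sum1 : \sum_i w i = 1).

Lemma convex_comb_ge (f : I -> R) (a : R) :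
  (forall i, 0 < w i -> a <= f i) -> a <= \sum_i w i * f i.
Proof.
move=> f_ge; rewrite -[a]mul1r -w_sum1 mulr_suml; apply: ler_sum => i _.
have [w0|w_gt0] := eqVneq (w i) 0; first by rewrite w0 !mul0r.
by rewrite ler_wpM2l // f_ge // lt0r w_gt0 w_ge0.
Qed.

Lemma convex_comb_le (f : I -> R) (b : R) :
  (forall i, 0 < w i -> f i <= b) -> \sum_i w i * f i <= b.
Proof.
move=> f_le; rewrite -lerN2 -sumrN.
under eq_bigr do rewrite -mulrN.
by apply: convex_comb_ge => i /f_le; rewrite lerN2.
Qed.

End ConvexCombination.

(* Meaningful only when a_pp > 0; otherwise the arg max/min ranges over a
   possibly empty predicate and returns a junk index. *)
Definition nbr_max {R : realFieldType} {n : nat}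
    (A : 'M[R]_n) (y : 'cV[R]_n) (p : 'I_n) : R :=
  y [arg max_(j > p | 0 < A p j) y j 0]%O 0.

Definition nbr_min {R : realFieldType} {n : nat}
    (A : 'M[R]_n) (y : 'cV[R]_n) (p : 'I_n) : R :=
  y [arg min_(j < p | 0 < A p j) y j 0]%O 0.

Section Neighbours.
Context {R : realFieldType} {n : nat} {A : 'M[R]_n} (y : 'cV[R]_n) {p : 'I_n}.

Hypothesis A_pp : 0 < A p p.

Lemma nbr_max_ge {l} : 0 < A p l -> y l 0 <= nbr_max A y p.
Proof. by rewrite /nbr_max; case: arg_maxP => // j _ max_j /max_j. Qed.

Lemma nbr_min_le {l} : 0 < A p l -> nbr_min A y p <= y l 0.
Proof. by rewrite /nbr_min; case: arg_minP => // j _ min_j /min_j. Qed.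

Lemma nbr_max_attained : exists2 j, 0 < A p j & nbr_max A y p = y j 0.
Proof. by rewrite /nbr_max; case: arg_maxP => // j Apj _; exists j. Qed.

Lemma nbr_min_attained : exists2 j, 0 < A p j & nbr_min A y p = y j 0.
Proof. by rewrite /nbr_min; case: arg_minP => // j Apj _; exists j. Qed.

Lemma nbr_min_le_max : nbr_min A y p <= nbr_max A y p.
Proof. exact: le_trans (nbr_min_le A_pp) (nbr_max_ge A_pp). Qed.

Lemma row_sqr_dev_ge (eta c : R) : (forall j, 0 <= A p j) -> 0 <= eta ->
  (forall j, 0 < A p j -> eta <= A p j) ->
  eta / 2 * (nbr_max A y p - nbr_min A y p) ^+ 2 <=
    \sum_j A p j * (y j 0 - c) ^+ 2.
Proof.
move=> A_ge0 eta_ge0 A_eta.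
have [j1 Apj1 ->] := nbr_max_attained; have [j2 Apj2 ->] := nbr_min_attained.
exact: weighted_sqr_dev_ge (A_eta _ Apj1) (A_eta _ Apj2).
Qed.

End Neighbours.

Definition separated {R : realFieldType} {n : nat} (x : nat -> 'cV[R]_n)
    (S : {pred 'I_n}) (a b : R) (t : nat) : Prop :=
  forall j, (j \in S -> a <= x t j 0) /\ (j \notin S -> x t j 0 <= b).

Definition crossing {R : realFieldType} {n : nat} (A : nat -> 'M[R]_n)
    (S : {pred 'I_n}) (t : nat) : Prop :=
  exists u l, [/\ u \in S, l \notin S & 0 < A t l u \/ 0 < A t u l].

Definition straddles {R : realFieldType} {n : nat} (A : nat -> 'M[R]_n)
    (x : nat -> 'cV[R]_n) (a b : R) (t : nat) (p : 'I_n) : bool :=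
  (nbr_min (A t) (x t) p <= b) && (a <= nbr_max (A t) (x t) p).

Section Cut.
Context {R : realFieldType} {n : nat} {A : nat -> 'M[R]_n} {x : nat -> 'cV[R]_n}.
Hypothesis x_rec : forall t, x t.+1 = A t *m x t.
Hypothesis A_ge0 : forall t i j, 0 <= A t i j.
Hypothesis A_row1 : forall t i, \sum_j A t i j = 1.
Hypothesis A_diag_gt0 : forall t i, 0 < A t i i.
Context {S : {pred 'I_n}} {a b : R}.

Lemma separated_step {t} :
  separated x S a b t -> ~ crossing A S t -> separated x S a b t.+1.
Proof.
move=> sep no_cross j; rewrite x_rec !mxE; split=> Sj.
- apply: convex_comb_ge => // l Ajl; apply: (proj1 (sep l)).
  by apply/negPn/negP => Sl; apply: no_cross; exists j, l; split=> //; right.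
- apply: convex_comb_le => // l Ajl; apply: (proj2 (sep l)).
  by apply/negP => Sl; apply: no_cross; exists l, j; split=> //; left.
Qed.

Lemma crossing_straddles {t} :
  separated x S a b t -> crossing A S t -> exists p, straddles A x a b t p.
Proof.
move=> sep [u [l [Su Sl Aul]]].
have a_le_u := proj1 (sep u) Su; have l_le_b := proj2 (sep l) Sl.
have [Alu|Aul'] := Aul; [exists l | exists u]; apply/andP; split.
- exact: le_trans (nbr_min_le (x t) (A_diag_gt0 t l) (A_diag_gt0 t l)) l_le_b.
- exact: le_trans a_le_u (nbr_max_ge (x t) (A_diag_gt0 t l) Alu).
- exact: le_trans (nbr_min_le (x t) (A_diag_gt0 t u) Aul') l_le_b.
- exact: le_trans a_le_u (nbr_max_ge (x t) (A_diag_gt0 t u) (A_diag_gt0 t u)).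
Qed.

Lemma first_crossing {r t} : separated x S a b t -> crossing A S (t + r) ->
  exists2 t', (t <= t' <= t + r)%N & exists p, straddles A x a b t' p.
Proof.
elim: r t => [|r IH] t sep cross_tr.
  rewrite addn0 in cross_tr *.
  by exists t; [rewrite leqnn | exact: crossing_straddles].
have [cross_t|no_cross] := classic (crossing A S t).
  by exists t; [rewrite leqnn leq_addr | exact: crossing_straddles].
rewrite -addSnnS in cross_tr.
have [t' /andP[t_t' t'_tr] str] := IH t.+1 (separated_step sep no_cross) cross_tr.
by exists t' => //; apply/andP; split; lia.
Qed.

End Cut.

Lemma ler_sum_cover {R : realFieldType} (I J : eqType) (K : finType)
    (ri : seq I) (rj : seq J) (F : I -> R) (c : J -> K -> I -> bool) :
  (forall i, 0 <= F i) ->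
  (forall i, i \in ri -> F i != 0 -> exists2 j, j \in rj & exists k, c j k i) ->
  \sum_(i <- ri) F i <= \sum_(j <- rj) \sum_k \sum_(i <- ri) (c j k i)%:R * F i.
Proof.
move=> F_ge0 covered.
have term_ge0 j k i : 0 <= (c j k i)%:R * F i by rewrite mulr_ge0.
under [X in _ <= X]eq_bigr do rewrite exchange_big.
rewrite exchange_big /= big_seq [X in _ <= X]big_seq; apply: ler_sum => i ri_i.
have [->|/(covered i ri_i)[j rj_j [k cjki]]] := eqVneq (F i) 0.
  by apply: sumr_ge0 => j _; apply: sumr_ge0 => k _; rewrite mulr0.
rewrite (big_rem j) //= (bigD1 k) //= cjki mul1r -addrA lerDl.
apply: addr_ge0; first by apply: sumr_ge0 => k' _.
by apply: sumr_ge0 => j' _; apply: sumr_ge0 => k' _.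
Qed.

Lemma xpos_permV {R : realFieldType} {n : nat} (s : 'S_n) (y : 'cV[R]_n) (j : 'I_n) :
  xpos s y ((s^-1)%g j) = y j 0.
Proof. by rewrite /xpos valK permKV. Qed.

Lemma sorted_separated {R : realFieldType} {n : nat} {x : nat -> 'cV[R]_n}
    {s : 'S_n} {t i : nat} :
  sorted_by s (x t) -> (i.+1 < n)%N ->
  separated x [pred j | (s^-1)%g j <= i]%N (xpos s (x t) i) (xpos s (x t) i.+1) t.
Proof.
move=> sorted_s lt_i j; rewrite !inE -!(xpos_permV s (x t) j).
have := ltn_ord ((s^-1)%g j); split=> ji; apply: sorted_s; lia.
Qed.

Theorem lemma4 (R : realFieldType) (n : nat) (eta : R) (B : nat)
  (A : nat -> 'M[R]_n) (x : nat -> 'cV[R]_n) :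
  0 < eta ->
  (1 <= B)%N ->
  (forall k, x k.+1 = A k *m x k) ->
  (forall k, doubly_stochastic (A k)) ->
  (forall k (i : 'I_n), 0 < A k i i) ->
  (forall k (i j : 'I_n), 0 < A k i j -> eta <= A k i j) ->
  (forall (k : nat) (s : 'S_n), sorted_by s (x (k * B)%N) ->
     forall d : nat, (1 <= d)%N -> (d <= n - 1)%N ->
       xpos s (x (k * B)%N) d.-1 = xpos s (x (k * B)%N) d \/
       exists (t : nat) (i j : 'I_n),
         [/\ (k * B <= t)%N, (t <= k.+1 * B - 1)%N,
             (((s^-1)%g i) < d)%N, (d <= (s^-1)%g j)%N &
             (in_edges (A t) i j \/ in_edges (A t) j i)]) ->
  forall (k : nat) (s : 'S_n), sorted_by s (x (k * B)%N) ->
    Vfun (x (k * B)%N) - Vfun (x (k.+1 * B)%N) >=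
      eta / 2 * \sum_(0 <= i < n - 1)
        (xpos s (x (k * B)%N) i - xpos s (x (k * B)%N) i.+1) ^+ 2.
Proof.
move=> eta_gt0 B_ge1 x_rec A_ds A_diag A_eta cut k s sorted_s.
have A_ge0 t i j : 0 <= A t i j by case: (A_ds t).
have A_row1 t i : \sum_j A t i j = 1 by case: (A_ds t) => _ [].
have eta_half_ge0 : 0 <= eta / 2 by rewrite divr_ge0 ?ltW.
have -> : (k.+1 * B = k * B + B)%N by rewrite mulSn addnC.
set t0 := (k * B)%N; set u := xpos s (x t0).
pose spans_gap t p i := straddles A x (u i) (u i.+1) t p.
have telescope : Vfun (x t0) - Vfun (x (t0 + B)) =
    \sum_(t0 <= t < t0 + B) (Vfun (x t) - Vfun (x t.+1)).
  rewrite -opprB -(telescope_sumr (fun t => Vfun (x t)) (leq_addr B t0)) -sumrN.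
  by apply: eq_bigr => t _; rewrite opprB.
have decrease t : eta / 2 * \sum_p \sum_(0 <= i < n - 1)
    (spans_gap t p i)%:R * (u i - u i.+1) ^+ 2 <= Vfun (x t) - Vfun (x t.+1).
  rewrite x_rec Vfun_sub_mulmx // mulr_sumr; apply: ler_sum => p _.
  apply: le_trans (row_sqr_dev_ge (x t) (A_diag t p) _ _
                     (A_ge0 t p) (ltW eta_gt0) (A_eta t p)).
  rewrite ler_wpM2l //; apply: sum_sqr_gaps_le; first exact: nbr_min_le_max.
  by move=> i lt_i; apply: sorted_s => //; lia.
have covered : \sum_(0 <= i < n - 1) (u i - u i.+1) ^+ 2 <=
    \sum_(t0 <= t < t0 + B) \sum_p \sum_(0 <= i < n - 1)
      (spans_gap t p i)%:R * (u i - u i.+1) ^+ 2.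
  apply: ler_sum_cover => [i|i]; first exact: sqr_ge0.
  rewrite mem_index_iota expf_eq0 /= => lt_i gap_i.
  have [eq_gap|[t [v [l [t0_t t_t1 v_up l_low edge]]]]] := cut k s sorted_s i.+1 isT lt_i.
    by move: gap_i; rewrite /u eq_gap subrr eqxx.
  have lt_in : (i.+1 < n)%N by lia.
  have sep := sorted_separated sorted_s lt_in.
  have cross : crossing A [pred j | (s^-1)%g j <= i]%N (t0 + (t - t0)).
    by rewrite subnKC //; exists v, l; split; rewrite ?inE -?ltnNge.
  have [t' t'_range [p str]] := first_crossing x_rec A_ge0 A_row1 A_diag sep cross.
  exists t'; last by exists p.
  by rewrite mem_index_iota; lia.
rewrite telescope; apply: le_trans (ler_wpM2l eta_half_ge0 covered) _.
by rewrite mulr_sumr; apply: ler_sum => t _; exact: decrease.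
Qed.
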